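(* Let $X_{j,i}\in\Theta$ ($1\le j\le m$, $1\le i\le n_j$) be data, let $k_1,\dots,k_m\ge 1$ and $M\ge1$ be integers, and let $P^j_{n_j}=\frac{1}{n_j}\sum_{i=1}^{n_j}\delta_{X_{j,i}}$. For $\vec G=(G_1,\dots,G_m)$ with $G_j\in\mathcal{O}_{k_j}(\Theta)$ and $\boldsymbol H=(H_1,\dots,H_M)$ with $H_i\in\mathcal{P}_2(\Theta)$, define $$f(\vec G,\boldsymbol H)=\sum_{j=1}^m\Big[W_2^2(G_j,P^j_{n_j})+\tfrac1m d_{W_2}^2(G_j,\boldsymbol H)\Big].$$ Consider one iteration of the Multilevel Wasserstein Means algorithm started from $(\vec G^{(t)},\boldsymbol H^{(t)})$: (1) for each $j$, let $i_j\in\arg\min_{1\le u\le M}W_2^2(G^{(t)}_j,H^{(t)}_u)$ and let $G^{(t+1)}_j$ be a minimizer over $G\in\mathcal{O}_{k_j}(\Theta)$ of $W_2^2(G,P^j_{n_j})+W_2^2(G,H^{(t)}_{i_j})/m$; (2) for each $j$, let $i'_j\in\arg\min_{1\le u\le M}W_2^2(G^{(t+1)}_j,H^{(t)}_u)$, set $C_i=\{l:i'_l=i\}$, and for each $i$ with $C_i\neq\emptyset$ let $H^{(t+1)}_i$ be a minimizer over $H\in\mathcal{P}_2(\Theta)$ of $\sum_{l\in C_i}W_2^2(H,G^{(t+1)}_l)$, while $H^{(t+1)}_i=H^{(t)}_i$ if $C_i=\emptyset$. Assuming all the minimizers above exist, $f(\vec G^{(t+1)},\boldsymbol H^{(t+1)})\le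 f(\vec G^{(t)},\boldsymbol H^{(t)})$. In particular the algorithm monotonically decreases the objective.
   Context: $\Theta\subset\mathbb{R}^d$; $\mathcal{P}_2(\Theta)$ is the set of Borel probability measures $G$ on $\Theta$ with $\int\|x\|^2dG(x)<\infty$. For $G,G'\in\mathcal{P}_2(\Theta)$, $W_2(G,G')=\big(\inf_{\pi\in\Pi(G,G')}\int\|x-y\|^2d\pi(x,y)\big)^{1/2}$, where $\Pi(G,G')$ is the set of couplings of $G$ and $G'$. $\mathcal{O}_k(\Theta)$ denotes the set of probability measures with at most $k$ support points in $\Theta$. For $\boldsymbol H=(H_1,\dots,H_M)$, $d_{W_2}^2(G,\boldsymbol H):=\min_{1\le i\le M}W_2^2(G,H_i)$. *)

From Stdlib Require Fin.
From Stdlib Require Import Reals Lra List ClassicalEpsilon.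
Open Scope R_scope.

Definition set (T : Type) := T -> Prop.

Definition Rd (d : nat) := Fin.t d -> R.

Fixpoint sumFin (d : nat) : (Fin.t d -> R) -> R :=
  match d return (Fin.t d -> R) -> R with
  | O => fun _ => 0
  | S d' => fun f => f Fin.F1 + sumFin d' (fun i => f (Fin.FS i))
  end.

Definition sqdist {d : nat} (x y : Rd d) : R := sumFin d (fun i => (x i - y i) ^ 2).
Definition dist_Rd {d : nat} (x y : Rd d) : R := sqrt (sqdist x y).
Definition zero_Rd (d : nat) : Rd d := fun _ => 0.

(** distance on R^d x R^d (induces the product topology) *)
Definition dist_prod {d : nat} (z w : Rd d * Rd d) : R :=
  dist_Rd (fst z) (fst w) + dist_Rd (snd z) (snd w).

Definition is_open {T : Type} (dist : T -> T -> R) (U : set T) : Prop :=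
  forall x, U x -> exists e, 0 < e /\ forall y, dist x y < e -> U y.

Inductive borel {T : Type} (dist : T -> T -> R) : set T -> Prop :=
| borel_open : forall U, is_open dist U -> borel dist U
| borel_compl : forall A, borel dist A -> borel dist (fun x => ~ A x)
| borel_cunion : forall A : nat -> set T,
    (forall n, borel dist (A n)) -> borel dist (fun x => exists n, A n x)
| borel_ext : forall A B, borel dist A -> (forall x, A x <-> B x) -> borel dist B.

(** Borel probability measures (values on non-Borel sets are irrelevant). *)
Definition is_prob {T : Type} (dist : T -> T -> R) (mu : set T -> R) : Prop :=
  (forall A, borel dist A -> 0 <= mu A) /\
  mu (fun _ => True) = 1 /\
  (forall A : nat -> set T,
     (forall n, borel dist (A n)) ->
     (forall n p x, n <> p -> A n x -> A p x -> False) ->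
     infinite_sum (fun n => mu (A n)) (mu (fun x => exists n, A n x))).

(** Integral of a nonnegative function: supremum of lower simple sums
    sum_k c_k mu(A_k) over finite families of disjoint Borel sets A_k with
    0 <= c_k <= f on A_k.  [integral_is dist mu f v] : the integral is finite
    and equals v. *)
Definition lower_family {T : Type} (dist : T -> T -> R) (f : T -> R)
  (L : list (R * set T)) : Prop :=
  Forall (fun p => borel dist (snd p) /\ 0 <= fst p /\
                   forall z, snd p z -> fst p <= f z) L /\
  ForallOrdPairs (fun p q => forall z, snd p z -> snd q z -> False) L.

Definition lower_value {T : Type} (mu : set T -> R) (L : list (R * set T)) : R :=
  fold_right (fun p s => fst p * mu (snd p) + s) 0 L.

Definition integral_is {T : Type} (dist : T -> T -> R) (mu : set T -> R)
  (f : T -> R) (v : R) : Prop :=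
  is_lub (fun s => exists L, lower_family dist f L /\ s = lower_value mu L) v.

Definition measure (d : nat) := set (Rd d) -> R.

Definition is_prob_Rd {d : nat} (mu : measure d) : Prop := is_prob (@dist_Rd d) mu.

Definition coupling {d : nat} (pi : set (Rd d * Rd d) -> R) (G H : measure d) : Prop :=
  is_prob (@dist_prod d) pi /\
  (forall A, borel (@dist_Rd d) A -> pi (fun z => A (fst z)) = G A) /\
  (forall B, borel (@dist_Rd d) B -> pi (fun z => B (snd z)) = H B).

(** greatest lower bound (0 if it does not exist) *)
Definition is_glb (E : R -> Prop) (m : R) : Prop :=
  (forall x, E x -> m <= x) /\ (forall b, (forall x, E x -> b <= x) -> b <= m).

Definition Rglb (E : R -> Prop) : R :=
  match excluded_middle_informative (exists m, is_glb E m) with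
  | left h => proj1_sig (constructive_indefinite_description _ h)
  | right _ => 0
  end.

Definition W2sq {d : nat} (G H : measure d) : R :=
  Rglb (fun v => exists pi, coupling pi G H /\
          integral_is (@dist_prod d) pi (fun z => sqdist (fst z) (snd z)) v).

Definition in_P2 {d : nat} (Theta : set (Rd d)) (mu : measure d) : Prop :=
  is_prob_Rd mu /\
  (exists A, borel (@dist_Rd d) A /\ (forall x, A x -> Theta x) /\ mu A = 1) /\
  (exists v, integral_is (@dist_Rd d) mu (fun x => sqdist x (zero_Rd d)) v).

Definition in_Ok {d : nat} (Theta : set (Rd d)) (k : nat) (mu : measure d) : Prop :=
  is_prob_Rd mu /\
  exists xs : list (Rd d),
    (length xs <= k)%nat /\ Forall Theta xs /\ mu (fun x => In x xs) = 1.

Fixpoint sumR (n : nat) (f : nat -> R) : R :=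
  match n with
  | O => 0
  | S n' => sumR n' f + f n'
  end.

Fixpoint min_upto (n : nat) (f : nat -> R) : R :=
  match n with
  | O => f O
  | S n' => Rmin (min_upto n' f) (f n)
  end.

Definition dirac {d : nat} (x : Rd d) : measure d :=
  fun A => if excluded_middle_informative (A x) then 1 else 0.

Definition empirical {d : nat} (n : nat) (xs : nat -> Rd d) : measure d :=
  fun A => / INR n * sumR n (fun i => dirac (xs i) A).

(** d_{W_2}^2(G, H) = min_{i < M} W_2^2(G, H_i)  (H indexed 0..M-1) *)
Definition dW2sq {d : nat} (M : nat) (G : measure d) (H : nat -> measure d) : R :=
  min_upto (M - 1) (fun i => W2sq G (H i)).

(** objective f(G, H); P j is the j-th empirical measure, j = 0..m-1 *)
Definition objective {d : nat} (m M : nat) (P : nat -> measure d)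
  (G : nat -> measure d) (H : nat -> measure d) : R :=
  sumR m (fun j => W2sq (G j) (P j) + / INR m * dW2sq M (G j) H).

(* One MWM iteration performs block-coordinate descent on f.  Step (1) does not
   increase the j-th summand, because G^(t+1)_j beats G^(t)_j on a surrogate in
   which d_{W_2}^2(G^(t)_j, H^(t)) is attained at H^(t)_{i_j}, while after the
   update d_{W_2}^2 is at most the distance to H^(t)_{i'_j}.  Step (2) then
   regroups the cost sum_j W_2^2(G^(t+1)_j, H_{i'_j}) cluster by cluster; each
   cluster cost is minimized by H^(t+1)_i and unchanged for empty clusters.
   Symmetry of W_2^2, needed to match the two argument orders, comes from
   swapping the coordinates of couplings. *)

From Stdlib Require Import Reals List.
Open Scope R_scope.
From Stdlib Require Import Lra Lia FunctionalExtensionality PropExtensionality.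

Lemma sumFin_ext d (f g : Fin.t d -> R) :
  (forall i, f i = g i) -> sumFin d f = sumFin d g.
Proof.
  revert f g; induction d as [|d IH]; intros f g Hfg; simpl; auto.
  rewrite Hfg; f_equal; apply IH; intros; apply Hfg.
Qed.

Lemma sqdist_sym d (x y : Rd d) : sqdist x y = sqdist y x.
Proof. unfold sqdist; apply sumFin_ext; intros; ring. Qed.

Lemma ForallOrdPairs_map {A B} (P : A -> A -> Prop) (Q : B -> B -> Prop)
  (h : A -> B) (L : list A) :
  (forall p q, P p q -> Q (h p) (h q)) ->
  ForallOrdPairs P L -> ForallOrdPairs Q (map h L).
Proof.
  intros HPQ; induction 1 as [|a L Ha _ IH]; simpl; constructor; auto.
  apply Forall_map; eapply Forall_impl; [|exact Ha]; auto.
Qed.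

Section CouplingSwap.
Variable d : nat.

Definition swap_pair (z : Rd d * Rd d) : Rd d * Rd d := (snd z, fst z).

Definition swap_set (A : set (Rd d * Rd d)) : set (Rd d * Rd d) :=
  fun z => A (swap_pair z).

Definition swap_measure (pi : set (Rd d * Rd d) -> R) : set (Rd d * Rd d) -> R :=
  fun A => pi (swap_set A).

Lemma swap_setK A : swap_set (swap_set A) = A.
Proof. apply functional_extensionality; intros [x y]; reflexivity. Qed.

Lemma borel_swap_set A : borel (@dist_prod d) A -> borel (@dist_prod d) (swap_set A).
Proof.
  induction 1 as [U HU | A _ IH | A _ IH | A B _ IH HAB].
  - apply borel_open; intros [x1 x2] Hx.
    destruct (HU _ Hx) as [e [He Hball]]; exists e; split; auto.
    intros [y1 y2] Hy; apply Hball; unfold dist_prod in *; simpl in *; lra.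
  - exact (borel_compl _ _ IH).
  - exact (borel_cunion _ (fun n => swap_set (A n)) IH).
  - apply (borel_ext _ (swap_set A)); auto; intros z; apply HAB.
Qed.

Lemma is_prob_swap pi : is_prob (@dist_prod d) pi -> is_prob (@dist_prod d) (swap_measure pi).
Proof.
  intros [Hpos [Htot Hadd]]; split; [|split].
  - intros A HA; apply Hpos, borel_swap_set, HA.
  - exact Htot.
  - intros A HA Hdisj; apply (Hadd (fun n => swap_set (A n))).
    + intros; apply borel_swap_set; auto.
    + intros n p z; apply Hdisj.
Qed.

Lemma coupling_swap pi G H : coupling pi G H -> coupling (swap_measure pi) H G.
Proof.
  intros [Hpi [HG HH]]; split; [apply is_prob_swap; auto | split].
  - intros A HA; apply (HH A HA).
  - intros A HA; apply (HG A HA).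
Qed.

Definition swap_family (p : R * set (Rd d * Rd d)) := (fst p, swap_set (snd p)).

Lemma lower_family_swap f L :
  lower_family (@dist_prod d) f L ->
  lower_family (@dist_prod d) (fun z => f (swap_pair z)) (map swap_family L).
Proof.
  intros [Hlow Hdisj]; split.
  - apply Forall_map; eapply Forall_impl; [|exact Hlow].
    intros [c A] [HA [Hc Hle]]; simpl; repeat split; auto.
    apply borel_swap_set; auto.
  - eapply ForallOrdPairs_map; [|exact Hdisj].
    intros [c A] [c' B] HAB z; apply HAB.
Qed.

Lemma lower_value_swap pi L :
  lower_value pi (map swap_family L) = lower_value (swap_measure pi) L.
Proof. induction L as [|p L IH]; simpl; auto; rewrite IH; auto. Qed.

Lemma lower_value_swap_measure pi L :
  lower_value (swap_measure pi) (map swap_family L) = lower_value pi L.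
Proof.
  induction L as [|p L IH]; simpl; auto.
  rewrite IH; unfold swap_measure; rewrite swap_setK; auto.
Qed.

Lemma integral_is_swap pi f v :
  integral_is (@dist_prod d) pi f v ->
  integral_is (@dist_prod d) (swap_measure pi) (fun z => f (swap_pair z)) v.
Proof.
  intros [Hub Hleast]; split.
  - intros s [L [HL ->]]; apply Hub.
    exists (map swap_family L); split.
    + pose proof (lower_family_swap _ _ HL) as Hswapped; simpl in Hswapped.
      replace (fun z => f (swap_pair (swap_pair z))) with f in Hswapped
        by (apply functional_extensionality; intros []; reflexivity).
      exact Hswapped.
    + symmetry; apply lower_value_swap.
  - intros b Hb; apply Hleast; intros s [L [HL ->]]; apply Hb.
    exists (map swap_family L); split.
    + apply lower_family_swap; auto.
    + symmetry; apply lower_value_swap_measure.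
Qed.

Lemma transport_cost_swap G H v :
  (exists pi, coupling pi G H /\
     integral_is (@dist_prod d) pi (fun z => sqdist (fst z) (snd z)) v) ->
  (exists pi, coupling pi H G /\
     integral_is (@dist_prod d) pi (fun z => sqdist (fst z) (snd z)) v).
Proof.
  intros [pi [Hpi Hint]]; exists (swap_measure pi); split.
  - apply coupling_swap; auto.
  - replace (fun z : Rd d * Rd d => sqdist (fst z) (snd z))
      with (fun z => sqdist (fst (swap_pair z)) (snd (swap_pair z)))
      by (apply functional_extensionality; intros; apply sqdist_sym).
    exact (integral_is_swap pi (fun z => sqdist (fst z) (snd z)) v Hint).
Qed.

End CouplingSwap.

Lemma W2sq_sym d (G H : measure d) : W2sq G H = W2sq H G.
Proof.
  unfold W2sq; f_equal; apply functional_extensionality; intros v.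
  apply propositional_extensionality; split; apply transport_cost_swap.
Qed.

Lemma sumR_ext n f g : (forall j, (j < n)%nat -> f j = g j) -> sumR n f = sumR n g.
Proof. induction n; intros Hfg; simpl; auto; rewrite IHn, Hfg; auto. Qed.

Lemma sumR_le n f g : (forall j, (j < n)%nat -> f j <= g j) -> sumR n f <= sumR n g.
Proof. induction n; intros Hfg; simpl; [lra|]; apply Rplus_le_compat; auto. Qed.

Lemma sumR_add n f g : sumR n (fun j => f j + g j) = sumR n f + sumR n g.
Proof. induction n; simpl; [ring|]; rewrite IHn; ring. Qed.

Lemma sumR_scal n c f : sumR n (fun j => c * f j) = c * sumR n f.
Proof. induction n; simpl; [ring|]; rewrite IHn; ring. Qed.

Lemma sumR_zero n : sumR n (fun _ => 0) = 0.
Proof. induction n; simpl; [|rewrite IHn]; ring. Qed.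

Lemma sumR_delta M a x : (a < M)%nat ->
  sumR M (fun i => if Nat.eqb a i then x i else 0) = x a.
Proof.
  induction M as [|M IH]; intros Ha; [lia|]; simpl.
  destruct (Nat.eqb_spec a M) as [->|Hne].
  - rewrite (sumR_ext M _ (fun _ => 0)), sumR_zero; [ring|].
    intros j Hj; destruct (Nat.eqb_spec M j); [lia|auto].
  - rewrite IH; [ring|lia].
Qed.

Lemma sumR_partition m M (a : nat -> nat) (g : nat -> nat -> R) :
  (forall l, (l < m)%nat -> (a l < M)%nat) ->
  sumR m (fun l => g l (a l)) =
  sumR M (fun i => sumR m (fun l => if Nat.eqb (a l) i then g l i else 0)).
Proof.
  induction m as [|m IH]; intros Ha; simpl.
  - symmetry; apply sumR_zero.
  - rewrite sumR_add, IH by auto; f_equal.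
    symmetry; apply sumR_delta; auto.
Qed.

Lemma min_upto_le n f i : (i <= n)%nat -> min_upto n f <= f i.
Proof.
  induction n as [|n IH]; intros Hi; simpl.
  - replace i with 0%nat by lia; lra.
  - destruct (Nat.eq_dec i (S n)) as [->|Hne]; [apply Rmin_r|].
    eapply Rle_trans; [apply Rmin_l | apply IH; lia].
Qed.

Lemma min_upto_glb n f c : (forall i, (i <= n)%nat -> c <= f i) -> c <= min_upto n f.
Proof. induction n; intros Hc; simpl; auto; apply Rmin_glb; auto. Qed.

Lemma dW2sq_le d M (G : measure d) (H : nat -> measure d) i :
  (i < M)%nat -> dW2sq M G H <= W2sq G (H i).
Proof. intros Hi; apply (min_upto_le (M - 1) (fun u => W2sq G (H u))); lia. Qed.

Lemma dW2sq_attained d M (G : measure d) (H : nat -> measure d) i :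
  (forall u, (u < M)%nat -> W2sq G (H i) <= W2sq G (H u)) ->
  (1 <= M)%nat -> W2sq G (H i) <= dW2sq M G H.
Proof. intros Hmin HM; apply min_upto_glb; intros u Hu; apply Hmin; lia. Qed.

Lemma cluster_update_le d m M (Theta : set (Rd d)) (G H H' : nat -> measure d)
  (a : nat -> nat) :
  (forall l, (l < m)%nat -> (a l < M)%nat) ->
  (forall i, (i < M)%nat -> in_P2 Theta (H i)) ->
  (forall i, (i < M)%nat ->
     ((exists l, (l < m)%nat /\ a l = i) ->
        in_P2 Theta (H' i) /\
        (forall K, in_P2 Theta K ->
           sumR m (fun l => if Nat.eqb (a l) i then W2sq (H' i) (G l) else 0)
           <= sumR m (fun l => if Nat.eqb (a l) i then W2sq K (G l) else 0))) /\
     (~ (exists l, (l < m)%nat /\ a l = i) -> H' i = H i)) ->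
  sumR m (fun l => W2sq (G l) (H' (a l))) <= sumR m (fun l => W2sq (G l) (H (a l))).
Proof.
  intros Ha HH Hupd.
  rewrite !(sumR_ext m (fun l => W2sq (G l) (_ (a l))) (fun l => W2sq (_ (a l)) (G l)))
    by (intros; apply W2sq_sym).
  rewrite (sumR_partition m M a (fun l i => W2sq (H' i) (G l)) Ha).
  rewrite (sumR_partition m M a (fun l i => W2sq (H i) (G l)) Ha).
  apply sumR_le; intros i Hi; destruct (Hupd i Hi) as [Hnonempty Hempty].
  destruct (Classical_Prop.classic (exists l, (l < m)%nat /\ a l = i)) as [Hex|Hnex].
  - apply (proj2 (Hnonempty Hex)), HH, Hi.
  - rewrite (Hempty Hnex); lra.
Qed.

Theorem theorem3p1 (d m M : nat) (Theta : set (Rd d))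
  (n : nat -> nat) (X : nat -> nat -> Rd d) (k : nat -> nat)
  (Gt Gt1 Ht Ht1 : nat -> measure d) (i1 i2 : nat -> nat) :
  (1 <= m)%nat -> (1 <= M)%nat ->
  (forall j, (j < m)%nat -> (1 <= k j)%nat) ->
  (forall j, (j < m)%nat -> (1 <= n j)%nat) ->
  (forall j i, (j < m)%nat -> (i < n j)%nat -> Theta (X j i)) ->
  (* starting point of the iteration *)
  (forall j, (j < m)%nat -> in_Ok Theta (k j) (Gt j)) ->
  (forall i, (i < M)%nat -> in_P2 Theta (Ht i)) ->
  (* step (1) *)
  (forall j, (j < m)%nat ->
     (i1 j < M)%nat /\
     (forall u, (u < M)%nat -> W2sq (Gt j) (Ht (i1 j)) <= W2sq (Gt j) (Ht u)) /\
     in_Ok Theta (k j) (Gt1 j) /\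
     (forall G, in_Ok Theta (k j) G ->
        W2sq (Gt1 j) (empirical (n j) (X j)) + W2sq (Gt1 j) (Ht (i1 j)) / INR m
        <= W2sq G (empirical (n j) (X j)) + W2sq G (Ht (i1 j)) / INR m)) ->
  (* step (2) *)
  (forall j, (j < m)%nat ->
     (i2 j < M)%nat /\
     (forall u, (u < M)%nat -> W2sq (Gt1 j) (Ht (i2 j)) <= W2sq (Gt1 j) (Ht u))) ->
  (forall i, (i < M)%nat ->
     ((exists l, (l < m)%nat /\ i2 l = i) ->
        in_P2 Theta (Ht1 i) /\
        (forall H, in_P2 Theta H ->
           sumR m (fun l => if Nat.eqb (i2 l) i then W2sq (Ht1 i) (Gt1 l) else 0)
           <= sumR m (fun l => if Nat.eqb (i2 l) i then W2sq H (Gt1 l) else 0))) /\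
     (~ (exists l, (l < m)%nat /\ i2 l = i) -> Ht1 i = Ht i)) ->
  objective m M (fun j => empirical (n j) (X j)) Gt1 Ht1
  <= objective m M (fun j => empirical (n j) (X j)) Gt Ht.
Proof.
  intros Hm HM _ _ _ HGt HHt Hstep1 Hassign Hupdate.
  set (P := fun j => empirical (n j) (X j)); unfold objective.
  assert (Hinvm : 0 < / INR m) by (apply Rinv_0_lt_compat, lt_0_INR; lia).
  apply Rle_trans with
    (sumR m (fun j => W2sq (Gt1 j) (P j) + / INR m * W2sq (Gt1 j) (Ht1 (i2 j)))).
  { apply sumR_le; intros j Hj.
    apply Rplus_le_compat_l, Rmult_le_compat_l; [lra|].
    apply dW2sq_le, (Hassign j Hj). }
  apply Rle_trans with
    (sumR m (fun j => W2sq (Gt1 j) (P j) + / INR m * W2sq (Gt1 j) (Ht (i2 j)))).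
  { rewrite !sumR_add, !sumR_scal.
    apply Rplus_le_compat_l, Rmult_le_compat_l; [lra|].
    apply (cluster_update_le d m M Theta); auto.
    intros l Hl; apply (Hassign l Hl). }
  apply sumR_le; intros j Hj.
  destruct (Hstep1 j Hj) as [_ [Hi1_min [_ Hi1_opt]]].
  destruct (Hassign j Hj) as [_ Hi2_min].
  pose proof (Hi1_opt (Gt j) (HGt j Hj)) as Hsurrogate; unfold Rdiv in Hsurrogate.
  assert (Hreassign : W2sq (Gt1 j) (Ht (i2 j)) <= W2sq (Gt1 j) (Ht (i1 j)))
    by (apply Hi2_min, Hstep1, Hj).
  assert (Hnearest : W2sq (Gt j) (Ht (i1 j)) <= dW2sq M (Gt j) Ht)
    by (apply dW2sq_attained; auto).
  unfold P; nra.
Qed.
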